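(* Let $n\ge1$ and $\alpha=\beta=1$. For every $\mathcal{C}\in\{\bullet,\circ\}^n$ and every $T\in\mathcal{T}_n$ with $R(T)=\mathcal{C}$, we have $$\sum_{\mathcal{C}'}W(\mathcal{C}\to\mathcal{C}')=|f^{-1}\{T\}|,$$ which is the number of last branching vertices of $T$. Consequently, $$|R^{-1}\{\mathcal{C}\}|\sum_{\mathcal{C}'}W(\mathcal{C}\to\mathcal{C}')=|(R\circ f)^{-1}\{\mathcal{C}\}|.$$
   Context: Open-boundary TASEP on $n$ sites: this is the continuous-time Markov chain on $\{\bullet,\circ\}^n$ (strings of length $n$, where $\bullet$ denotes a particle and $\circ$ a hole). Its transition rates are as follows, with $\mathcal{A},\mathcal{A}'$ arbitrary strings: - $W(\circ\mathcal{A}\to\bullet\mathcal{A})=\alpha$; - $W(\mathcal{A}\bullet\to\mathcal{A}\circ)=\beta$; - $W(\mathcal{A}\bullet\circ\mathcal{A}'\to\mathcal{A}\circ\bullet\mathcal{A}')=1$; - $W(\mathcal{C}\to\mathcal{C}')=0$ for all other pairs. A plane binary tree is a finite rooted tree in which every vertex is either an endpoint (a leaf, with no children) or has exactly two children, an ordered left child and right child. Every non-root vertex is thus either a left descendent or a right descendent of its parent. The endpoints are ordered from left to right in the planar order. $\mathcal{T}_n$ denotes the set of plane binary trees with exactly $n+2$ endpoints. The reduced configuration of $T\in\mathcal{T}_n$ is $R(T)=(t_1,\dots,t_n)\in\{\bullet,\circ\}^n$. Here $t_k=\bullet$ if the $(k+1)$-th endpoint from the left is a left child, and $t_k=\circ$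 if it is a right child. The leftmost and rightmost endpoints are ignored. A last branching vertex of a plane binary tree is a non-endpoint vertex both of whose children are endpoints. A marked tree is a pair $(T,v)$ with $T\in\mathcal{T}_n$ and $v$ a last branching vertex of $T$. The set of marked trees is $\widehat{\mathcal{T}}_n$. The map $f:\widehat{\mathcal{T}}_n\to\mathcal{T}_n$, $f(T,v)=T$, forgets the mark. *)

From HB Require Import structures.
From mathcomp Require Import all_boot all_order all_algebra.
Set Implicit Arguments. Unset Strict Implicit. Unset Printing Implicit Defensive.
Import Order.TTheory GRing.Theory Num.Theory.

Inductive tree := Leaf | Node of tree & tree.

Fixpoint tree_enc (t : tree) : GenTree.tree unit :=
  match t with
  | Leaf => GenTree.Node 0 [::]
  | Node l r => GenTree.Node 1 [:: tree_enc l; tree_enc r]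
  end.

Fixpoint tree_dec (g : GenTree.tree unit) : tree :=
  match g with
  | GenTree.Node 1 [:: l; r] => Node (tree_dec l) (tree_dec r)
  | _ => Leaf
  end.

Lemma tree_encK : cancel tree_enc tree_dec.
Proof. by elim=> //= l -> r ->. Qed.

HB.instance Definition _ := Countable.copy tree (can_type tree_encK).

Fixpoint nleaves (t : tree) : nat :=
  match t with Leaf => 1 | Node l r => nleaves l + nleaves r end.

Definition inTn (n : nat) (t : tree) : bool := nleaves t == n.+2.

(* For each endpoint, from left to right: true iff it is a left child.
   [b] is the status of the current subtree's root (irrelevant for the
   root of the whole tree; its value only matters if the tree is a single
   leaf, which is never the case in T_n). *)
Fixpoint leafdirs (b : bool) (t : tree) : seq bool :=
  match t with
  | Leaf => [:: b]
  | Node l r => leafdirs true l ++ leafdirs false r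
  end.

(* Reduced configuration R(T): drop the leftmost and rightmost endpoints.
   true = particle (bullet), false = hole (circ). *)
Definition Rconf (t : tree) : seq bool :=
  let s := leafdirs true t in behead (take (size s).-1 s).

(* Vertices of a tree, as paths from the root (false = go left,
   true = go right). *)
Fixpoint vertices (t : tree) : seq (seq bool) :=
  match t with
  | Leaf => [:: [::]]
  | Node l r => [::] :: [seq false :: p | p <- vertices l]
                     ++ [seq true :: p | p <- vertices r]
  end.

Fixpoint subtree (t : tree) (p : seq bool) : option tree :=
  match p, t with
  | [::], _ => Some t
  | false :: p', Node l _ => subtree l p'
  | true :: p', Node _ r => subtree r p'
  | _ :: _, Leaf => None
  end.

Definition is_lbv (t : tree) (p : seq bool) : bool :=
  subtree t p == Some (Node Leaf Leaf).

Definition lbvs (t : tree) : seq (seq bool) := [seq p <- vertices t | is_lbv t p].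

Definition marked (Tn : seq tree) : seq (tree * seq bool) :=
  [seq (T, v) | T <- Tn, v <- lbvs T].

Definition fmark (x : tree * seq bool) : tree := x.1.

(* TASEP transition rates on configurations C, C' (seq bool,
   true = particle). *)
Definition entry (C C' : seq bool) : bool :=
  (C == false :: behead C) && (C' == true :: behead C).
Definition exit (C C' : seq bool) : bool :=
  (C == rcons (take (size C).-1 C) true) &&
  (C' == rcons (take (size C).-1 C) false).
Definition hop (C C' : seq bool) : bool :=
  has (fun i => (C == take i C ++ [:: true; false] ++ drop i.+2 C) &&
                (C' == take i C ++ [:: false; true] ++ drop i.+2 C))
      (iota 0 (size C).-1).

Definition W {R : nzSemiRingType} (alpha beta : R) (C C' : seq bool) : R :=
  if entry C C' then alpha
  else if exit C C' then beta
  else if hop C C' then 1%R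
  else 0%R.

From HB Require Import structures.
From mathcomp Require Import all_boot all_order all_algebra.
From mathcomp Require Import zify.
Import Order.TTheory GRing.Theory Num.Theory.

(* Reading the endpoints of T from left to right, 1 for a left child and 0 for
   a right child, gives the word 1 R(T) 0.  Two adjacent endpoints form a
   factor 10 exactly when they are the two children of a last branching
   vertex, so the last branching vertices of T are the descents (factors 10)
   of 1 R(T) 0.  With alpha = beta = 1 every transition out of C has rate 1,
   and the transitions out of C correspond to the descents of 1 C 0: the
   leading one is an entry, the trailing one an exit, the others hops.  The
   second statement follows by summing over the trees with R(T) = C. *)

Fixpoint descents (s : seq bool) : nat :=
  if s is x :: t then (x && ~~ head true t) + descents t else 0.

Lemma descents_cat s1 s2 :
  descents (s1 ++ s2) = descents s1 + descents s2 + (last false s1 && ~~ head true s2).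
Proof.
elim: s1 => [|x t IH] /=; first by rewrite addn0.
rewrite IH; case: t {IH} => [|y u] /=; last by rewrite !addnA.
by case: x; rewrite /= ?andbF !addn0 // addnC.
Qed.

Lemma descents_rcons0 s : descents (rcons s false) = descents s + last false s.
Proof. by rewrite -cats1 descents_cat /= andbT !addn0. Qed.

Lemma descents_count s :
  descents s = count (fun i => nth false s i && ~~ nth false s i.+1) (iota 0 (size s).-1).
Proof.
elim: s => [|x [|y u] IH] //; first by rewrite /= andbF.
by rewrite /= -[_ + descents u]/(descents (y :: u)) IH -[1]/(1 + 0) iotaDl count_map.
Qed.

Lemma head_leafdirs_cat x0 b t s :
  head x0 (leafdirs b t ++ s) = if t is Node _ _ then true else b.
Proof. by elim: t b s => [|l IHl r _] b s //=; rewrite -catA IHl; case: l {IHl}. Qed.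

Lemma head_leafdirs x0 b t : head x0 (leafdirs b t) = if t is Node _ _ then true else b.
Proof. by rewrite -[leafdirs b t]cats0 head_leafdirs_cat. Qed.

Lemma last_leafdirs x0 b t : last x0 (leafdirs b t) = if t is Node _ _ then false else b.
Proof. by elim: t b x0 => [|l _ r IHr] b x0 //=; rewrite last_cat IHr; case: r {IHr}. Qed.

Lemma size_leafdirs b t : size (leafdirs b t) = nleaves t.
Proof. by elim: t b => [|l IHl r IHr] b //=; rewrite size_cat IHl IHr. Qed.

Lemma nleaves_gt0 t : 0 < nleaves t.
Proof. by elim: t => //= l Hl r _; rewrite addn_gt0 Hl. Qed.

Lemma is_lbv_root l r : is_lbv (Node l r) [::] = (l == Leaf) && (r == Leaf).
Proof. by rewrite /is_lbv; case: l; case: r. Qed.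

Lemma size_lbvs_Node l r :
  size (lbvs (Node l r)) = ((l == Leaf) && (r == Leaf)) + size (lbvs l) + size (lbvs r).
Proof.
rewrite /lbvs /= is_lbv_root filter_cat !filter_map.
by case: (_ && _); rewrite /= size_cat !size_map.
Qed.

Lemma descents_leafdirs b t : descents (leafdirs b t) = size (lbvs t).
Proof.
elim: t b => [|l IHl r IHr] [] //=.
all: rewrite descents_cat IHl IHr size_lbvs_Node last_leafdirs head_leafdirs.
all: by case: l {IHl} => [|? ?]; case: r {IHr} => [|? ?]; rewrite /= ?addn0 ?add0n // addnC.
Qed.

Lemma leafdirs_Rconf t : 1 < nleaves t -> leafdirs true t = true :: rcons (Rconf t) false.
Proof.
case: t => [//|l r] _; rewrite /Rconf.
have := head_leafdirs false true (Node l r); have := last_leafdirs false true (Node l r).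
have : 1 < size (leafdirs true (Node l r)).
  by rewrite size_leafdirs /= -addn1 leq_add ?nleaves_gt0.
case: (leafdirs true (Node l r)) => [//|a u] /=; case/lastP: u => [//|u z] _.
by rewrite last_rcons => -> ->; rewrite size_rcons /= -cats1 take_size_cat // cats1.
Qed.

Lemma size_lbvs_descents t :
  1 < nleaves t -> size (lbvs t) = descents (true :: rcons (Rconf t) false).
Proof. by move=> t_gt1; rewrite -leafdirs_Rconf // descents_leafdirs. Qed.

Definition splice (a b : bool) i (C : seq bool) := take i C ++ [:: a; b] ++ drop i.+2 C.

Section Splice.

Variables (C : seq bool) (i : nat).
Hypothesis i_lt : i.+1 < size C.

Lemma size_splice a b : size (splice a b i C) = size C.
Proof. by rewrite /splice !size_cat size_takel /= ?size_drop; lia. Qed.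

Lemma nth_splice x0 a b k :
  nth x0 (splice a b i C) k = if k == i then a else if k == i.+1 then b else nth x0 C k.
Proof.
rewrite /splice nth_cat size_takel; last by lia.
case: ltnP => [k_lt|k_ge]; first by rewrite nth_take // !ifN_eq //; lia.
case E: (k - i) => [|[|j]] /=.
- by rewrite ifT //; lia.
- by rewrite ifN_eq ?ifT //; lia.
- by rewrite !ifN_eq ?nth_drop; try congr nth; lia.
Qed.

Lemma splice_fixed : (C == splice true false i C) = nth false C i && ~~ nth false C i.+1.
Proof.
apply/eqP/andP => [E | [Ci Ci1]].
  by rewrite E !nth_splice eqxx; case: eqP => [|_]; [lia | rewrite eqxx].
apply: (@eq_from_nth _ false); first by rewrite size_splice.
move=> k _; rewrite nth_splice.
have [->|_] //= := eqVneq k i; have [->|_] //= := eqVneq k i.+1.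
exact: negbTE.
Qed.

End Splice.

Lemma mem_iota0_pred m i : (i \in iota 0 m.-1) = (i.+1 < m).
Proof. by rewrite mem_iota add0n; lia. Qed.

Definition entry_moves (C : seq bool) :=
  if C == false :: behead C then [:: true :: behead C] else [::].
Definition exit_moves (C : seq bool) :=
  if C == rcons (take (size C).-1 C) true then [:: rcons (take (size C).-1 C) false] else [::].
Definition hop_moves (C : seq bool) :=
  [seq splice false true i C | i <- iota 0 (size C).-1 & C == splice true false i C].
Definition moves C := entry_moves C ++ exit_moves C ++ hop_moves C.

Lemma mem_moves C C' : (C' \in moves C) = [|| entry C C', exit C C' | hop C C'].
Proof.
rewrite !mem_cat /entry_moves /exit_moves /entry /exit.
congr [|| _, _ | _]; try by case: ifP; rewrite ?inE // andbC.
apply/mapP/hasP => [[i] | [i i_lt /andP[fixC /eqP ->]]].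
  by rewrite mem_filter => /andP[fixC i_lt] ->; exists i; rewrite ?fixC ?eqxx.
by exists i; rewrite ?mem_filter ?fixC.
Qed.

Lemma mem_hop_moves C x : x \in hop_moves C ->
  exists2 i, i.+1 < size C & x = splice false true i C /\ nth false C i.
Proof.
case/mapP=> i; rewrite mem_filter mem_iota0_pred => /andP[fixC i_lt] ->.
by rewrite splice_fixed // in fixC; case/andP: fixC => Ci _; exists i.
Qed.

Lemma size_hop_moves C : size (hop_moves C) = descents C.
Proof.
rewrite size_map size_filter descents_count.
by apply: eq_in_count => i; rewrite mem_iota0_pred; apply: splice_fixed.
Qed.

Lemma uniq_hop_moves C : uniq (hop_moves C).
Proof.
rewrite map_inj_in_uniq ?filter_uniq ?iota_uniq //.
have splice_neq i j : i.+1 < size C -> j.+1 < size C -> nth false C i -> i < j ->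
    splice false true i C != splice false true j C.
  move=> i_lt j_lt Ci ij; apply/eqP => /(congr1 (nth false ^~ i)).
  by rewrite !nth_splice // eqxx !ifN_eq ?Ci //; lia.
move=> i j; rewrite !mem_filter !mem_iota0_pred.
move=> /andP[+ i_lt] /andP[+ j_lt]; rewrite !splice_fixed // => /andP[Ci _] /andP[Cj _] eq_ij.
have [ij|ji|//] := ltngtP i j.
- by have := splice_neq i j i_lt j_lt Ci ij; rewrite eq_ij eqxx.
- by have := splice_neq j i j_lt i_lt Cj ji; rewrite eq_ij eqxx.
Qed.

Lemma size_entry_moves C : size (entry_moves C) = ~~ head true C.
Proof. by rewrite /entry_moves; case: C => [|[] t]; rewrite ?eqxx. Qed.

Lemma size_exit_moves C : size (exit_moves C) = last false C.
Proof.
rewrite /exit_moves; case/lastP: C => [//|C z].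
by rewrite size_rcons -cats1 take_size_cat // cats1 eqseq_rcons eqxx last_rcons; case: z.
Qed.

Lemma size_moves C : C != [::] -> size (moves C) = descents (true :: rcons C false).
Proof.
rewrite !size_cat size_entry_moves size_exit_moves size_hop_moves /=.
by rewrite descents_rcons0; case: C => [//|x t] _ /=; rewrite [last x t + _]addnC.
Qed.

Lemma head_hop_moves C :
  head true C = false -> {in hop_moves C, forall x, head true x = false}.
Proof.
move=> hC x /mem_hop_moves[i i_lt [-> _]].
by rewrite -nth0 nth_splice // nth0 hC; case: eqP.
Qed.

Lemma last_hop_moves C :
  last false C = true -> {in hop_moves C, forall x, last false x = true}.
Proof.
move=> lC x /mem_hop_moves[i i_lt [-> _]].
rewrite -nth_last size_splice // nth_splice // nth_last lC ifN_eq; last by lia.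
by case: eqP.
Qed.

Lemma uniq_moves C : uniq (moves C).
Proof.
rewrite /moves /entry_moves /exit_moves; set b := behead C; set p := take _ C.
have entry_fresh : C = false :: b -> true :: b \notin hop_moves C.
  move=> eC; have hC : head true C = false by rewrite eC.
  by apply/negP => /(head_hop_moves C hC).
have exit_fresh : C = rcons p true -> rcons p false \notin hop_moves C.
  move=> xC; have lC : last false C = true by rewrite xC last_rcons.
  by apply/negP => /(last_hop_moves C lC); rewrite last_rcons.
have entry_neq_exit : C = false :: b -> C = rcons p true -> true :: b != rcons p false.
  move=> eC xC; apply/eqP => /(congr1 (last false)); rewrite last_rcons /=.
  by have := congr1 (last false) xC; rewrite last_rcons {1}eC /=; case: (b) => [|y u] //= ->.
case: ifP => [/eqP eC|_]; case: ifP => [/eqP xC|_] /=.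
all: by rewrite ?inE ?negb_or ?uniq_hop_moves ?entry_fresh ?exit_fresh ?entry_neq_exit.
Qed.

Lemma size_mem_moves C x : x \in moves C -> size x = size C.
Proof.
rewrite !mem_cat /entry_moves /exit_moves => /or3P[].
- by case: ifP => // /eqP eC; rewrite inE => /eqP->; rewrite [in RHS]eC.
- by case: ifP => // /eqP xC; rewrite inE => /eqP->; rewrite [in RHS]xC !size_rcons.
- by case/mem_hop_moves=> i i_lt [-> _]; rewrite size_splice.
Qed.

Lemma sum_tuple_mem (T : finType) n (s : seq (seq T)) :
  uniq s -> {in s, forall x, size x = n} -> \sum_(t : n.-tuple T) (val t \in s) = size s.
Proof.
elim: s => [|x s IH] /=; first by rewrite big1.
case/andP=> x_notin_s uniq_s size_s.
have size_x : size x == n by rewrite size_s ?mem_head.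
rewrite -add1n -IH => [|//|y y_s]; last by rewrite size_s // inE y_s orbT.
rewrite (eq_bigr (fun t => (val t == x) + (val t \in s))) => [|t _]; last first.
  by rewrite inE; case: eqP => //= eq_tx; rewrite eq_tx (negbTE x_notin_s).
rewrite big_split /= (bigD1 (Tuple size_x)) //= eqxx big1 // => t t_neq_x.
by apply/eqP; rewrite eqb0; apply: contra t_neq_x => /eqP eq_tx; apply/eqP/val_inj.
Qed.

Local Open Scope ring_scope.

Lemma sum_W11_descents (R : nzSemiRingType) n (C : n.-tuple bool) : (0 < n)%N ->
  \sum_(C' : n.-tuple bool) W (1 : R) 1 C C' = (descents (true :: rcons C false))%:R.
Proof.
move=> n_gt0; have C_neq0 : val C != [::] by rewrite -size_eq0 size_tuple -lt0n.
rewrite (eq_bigr (fun C' => (val C' \in moves C)%:R)) => [|C' _]; last first.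
  by rewrite mem_moves /W; case: entry; case: exit; case: hop.
rewrite -natr_sum sum_tuple_mem ?uniq_moves ?size_moves // => x /size_mem_moves.
by rewrite size_tuple.
Qed.

Lemma count_marked (P : pred tree) Tn :
  count (fun x => P (fmark x)) (marked Tn) = (\sum_(T <- Tn | P T) size (lbvs T))%N.
Proof.
elim: Tn => [|T Tn IH]; first by rewrite big_nil.
rewrite /marked /= count_cat -/(marked Tn) IH big_cons count_map.
by rewrite (@eq_count _ _ (fun=> P T)) //; case: (P T); rewrite ?count_pred0 ?count_predT.
Qed.

Theorem mainTheorem3 (R : numDomainType) (n : nat) (Tn : seq tree) :
  (0 < n)%N ->
  uniq Tn -> (forall T, (T \in Tn) = inTn n T) ->
  (forall (C : n.-tuple bool) (T : tree), T \in Tn -> Rconf T = C ->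
     \sum_(C' : n.-tuple bool) W (1 : R) 1 C C'
       = (count (fun x => fmark x == T) (marked Tn))%:R
     /\ count (fun x => fmark x == T) (marked Tn) = size (lbvs T))
  /\
  (forall C : n.-tuple bool,
     (count (fun T => Rconf T == C) Tn)%:R * \sum_(C' : n.-tuple bool) W (1 : R) 1 C C'
       = (count (fun x => Rconf (fmark x) == C) (marked Tn))%:R).
Proof.
move=> n_gt0 uniq_Tn Tn_E.
have lbvs_Rconf T : T \in Tn -> size (lbvs T) = descents (true :: rcons (Rconf T) false).
  by rewrite Tn_E /inTn => /eqP leaves_T; rewrite size_lbvs_descents ?leaves_T.
split=> [C T T_in RT | C].
  have count_T : count (fun x => fmark x == T) (marked Tn) = size (lbvs T).
    by rewrite (count_marked (pred1 T)) -big_filter filter_pred1_uniq // big_seq1.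
  by rewrite count_T sum_W11_descents // lbvs_Rconf // RT.
rewrite (count_marked (fun T => Rconf T == C)) [in RHS]big_seq_cond.
rewrite (eq_bigr (fun=> descents (true :: rcons C false))); last first.
  by move=> T /andP[T_in /eqP <-]; apply: lbvs_Rconf.
by rewrite -[in RHS]big_seq_cond big_const_seq iter_addn_0 natrM mulrC sum_W11_descents.
Qed.
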